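(* Let $E$ be a complex vector space of dimension $e$, let $U$ be a complex orthogonal vector space of dimension $2k+1$ ($k\ge1$), let $\Delta$ be the spinor representation of $\mathfrak{so}(U)$, and let $V=\operatorname{Sym}(E\otimes U)\otimes\Delta$, with $\mathfrak{g}=\mathfrak{so}(U)$ acting diagonally and $H=\mathfrak{gl}(E)$ acting on $E$. Write $U=\mathbf{C}\oplus(U_1\oplus U_1^* )\oplus\cdots\oplus(U_k\oplus U_k^* )$ with isotropic lines $U_i,U_i^*$ paired by the form, a non-isotropic line $\mathbf{C}$, summands mutually orthogonal; the Cartan subalgebra of $\mathfrak{so}(U)$ consists of elements preserving each line, with weights identified with $k$-tuples via $\varepsilon_i$ = weight on $U_i$. Let $I_k=\{0,1\}^k$ and for $n\in\mathbf{Z}$ let $L_n=\bigoplus_{d\ge0}\operatorname{Sym}^d(E)\otimes\operatorname{Sym}^{d+n}(E)$ (with $\operatorname{Sym}^m=0$ for $m<0$). Then for every $\chi\in(\tfrac12+\mathbf{Z})^k$, as $H$-representations, \[ V_\chi\cong\operatorname{Sym}(E)\otimes\bigoplus_{v\in I_k}L_{\chi_1+v_1-\frac12}\otimes\cdots\otimes L_{\chi_k+v_k-\frac12}. \]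
   Context: The weights of $\Delta$ (each of multiplicity one) are $v-(\tfrac12,\dots,\tfrac12)$ for $v\in\{0,1\}^k$. $V_\chi$ denotes the $\chi$-weight space of $V$. *)

(* Complex numbers = algC (algebraically closed, char 0). *)
From HB Require Import structures.
From mathcomp Require Import all_boot all_order all_algebra all_field.
From mathcomp Require Import mpoly.
Set Implicit Arguments. Unset Strict Implicit. Unset Printing Implicit Defensive.
Import Order.TTheory GRing.Theory Num.Theory.
Local Open Scope ring_scope.

(* Generic: polynomial algebra Sym(E (x) W) where E = C^e has basis     *)
(* e_0..e_{e-1} and W has a basis indexed by a finite type T.           *)
(* Variables x_(t,a) <-> the vector w_t (x) e_a in degree 1.           *)
Definition nvars (T : finType) (e : nat) := #|{: T * 'I_e}|.

Definition SymEW (T : finType) (e : nat) := {mpoly algC[nvars T e]}.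

Definition vidx (T : finType) (e : nat) (t : T) (a : 'I_e) : 'I_(nvars T e) :=
  enum_rank ((t, a) : T * 'I_e).

Definition xvar (T : finType) (e : nat) (t : T) (a : 'I_e) : SymEW T e :=
  'X_(vidx t a).

(* Action of X in gl(E) = 'M_e on Sym(E (x) W) (W carries the trivial
   gl(E)-action): the derivation extending  X.(e_b) = sum_a X a b e_a,
   i.e.  X.p = sum_(t,a,b) X a b * x_(t,a) * d p / d x_(t,b). *)
Definition symAct (T : finType) (e : nat) (X : 'M[algC]_e) (p : SymEW T e)
  : SymEW T e :=
  \sum_(t : T) \sum_(a < e) \sum_(b < e)
     X a b *: (xvar t a * mderiv (vidx t b) p).

Definition degIn (T : finType) (e : nat) (t : T) (m : 'X_{1..nvars T e}) : nat :=
  \sum_(a < e) m (vidx t a).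

(* Isomorphism of H = gl(E)-representations between (sub)spaces
   A of VT1 and B of VT2 (A, B assumed stable under the actions). *)
Definition Hiso (e : nat) (VT1 VT2 : lmodType algC)
    (act1 : 'M[algC]_e -> VT1 -> VT1) (act2 : 'M[algC]_e -> VT2 -> VT2)
    (A : VT1 -> Prop) (B : VT2 -> Prop) : Prop :=
  exists phi : VT1 -> VT2,
    [/\ forall x, A x -> B (phi x),
        forall y, B y -> exists2 x, A x & phi x = y,
        forall x y, A x -> A y -> phi x = phi y -> x = y,
        forall (c : algC) x y, A x -> A y -> phi (c *: x + y) = c *: phi x + phi y
      & forall X x, A x -> phi (act1 X x) = act2 X (phi x)].

(* U : orthogonal space of dim 2k+1, basis indexed by Ubasis k :          *)
(*   None          <-> spanning vector of the non-isotropic line C       *)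
(*   Some (i,false)<-> spanning vector of the isotropic line U_i         *)
(*   Some (i,true) <-> spanning vector of the isotropic line U_i^*       *)
Definition Ubasis (k : nat) := option ('I_k * bool).

(* Cartan element h_t of so(U), t : 'I_k -> C : acts by t_i on U_i,
   by -t_i on U_i^*, by 0 on C. *)
Definition cartanU (k : nat) (t : 'I_k -> algC) (u : Ubasis k) : algC :=
  match u with
  | None => 0
  | Some (i, false) => t i
  | Some (i, true) => - t i
  end.

(* Spinor representation Delta: basis e_v, v in I_k = {0,1}^k, with e_v of
   weight v - (1/2,...,1/2).  V = Sym(E (x) U) (x) Delta is modelled as
   the direct sum over the basis e_v of Delta of copies of Sym(E (x) U). *)
Definition Ik (k : nat) := {ffun 'I_k -> bool}.

Definition Vspace (k e : nat) := {ffun Ik k -> SymEW (Ubasis k) e}.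

Definition cartanAct (k e : nat) (t : 'I_k -> algC) (f : Vspace k e)
  : Vspace k e :=
  [ffun v => \sum_(u : Ubasis k) \sum_(a < e)
                 cartanU t u *: (xvar u a * mderiv (vidx u a) (f v))
             + (\sum_(i < k) ((v i)%:R - 2^-1) * t i) *: f v].

Definition Vact (k e : nat) (X : 'M[algC]_e) (f : Vspace k e) : Vspace k e :=
  [ffun v => symAct X (f v)].

Definition Vweight (k e : nat) (chi : 'I_k -> algC) (f : Vspace k e) : Prop :=
  forall t : 'I_k -> algC, cartanAct t f = (\sum_(i < k) chi i * t i) *: f.

(* Right hand side.  Sym(E) (x) L_{n_1} (x) ... (x) L_{n_k} modelled in    *)
(* the polynomial algebra Sym(E (x) W), W with basis indexed by Rbasis k: *)
(*   None           <-> the factor Sym(E)                                 *)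
(*   Some (i, 0)    <-> the factor Sym^d(E) of L_{n_i}                     *)
(*   Some (i, 1)    <-> the factor Sym^(d+n_i)(E) of L_{n_i}                *)
(* L_n = (+)_{d>=0} Sym^d(E) (x) Sym^{d+n}(E) (Sym^m = 0 for m < 0): its    *)
(* tensor product with the others is the span of the monomials m with     *)
(* deg_{(i,1)} m = deg_{(i,0)} m + n_i for every i.                       *)
Definition Rbasis (k : nat) := option ('I_k * 'I_2).

Definition inLtensor (k e : nat) (n : 'I_k -> algC) (p : SymEW (Rbasis k) e)
  : Prop :=
  forall m, m \in msupp p -> forall i : 'I_k,
    (degIn (Some (i, 1%R)) m)%:R = (degIn (Some (i, 0%R)) m)%:R + n i :> algC.

Definition Rspace (k e : nat) := {ffun Ik k -> SymEW (Rbasis k) e}.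

Definition Ract (k e : nat) (X : 'M[algC]_e) (f : Rspace k e) : Rspace k e :=
  [ffun v => symAct X (f v)].

Definition RHSsub (k e : nat) (chi : 'I_k -> algC) (f : Rspace k e) : Prop :=
  forall v : Ik k, inLtensor (fun i => chi i + (v i)%:R - 2^-1) (f v).

From HB Require Import structures.
From mathcomp Require Import all_boot all_order all_algebra all_field.
From mathcomp Require Import mpoly.
From mathcomp Require Import ring.
Import GRing.Theory Num.Theory.
Local Open Scope ring_scope.

(* The basis vector x^m (x) e_v of V, with x^m a monomial in the variables
   E (x) U, has weight (deg_{U_i} m - deg_{U_i^*} m + v_i - 1/2)_i, so V_chi
   is spanned by the x^m (x) e_v of weight chi.  Renaming the variables
   E (x) C, E (x) U_i^*, E (x) U_i into those of the factors Sym(E), Sym^d(E)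
   and Sym^(d+n_i)(E) of the right-hand side, and sending e_v to the summand
   indexed by 1 - v, is a linear bijection which keeps the E-index of every
   variable, hence commutes with gl(E); it turns the weight condition
   deg_{U_i} - deg_{U_i^*} + v_i - 1/2 = chi_i into the defining condition
   deg_{(i,1)} = deg_{(i,0)} + n_i of L_{n_i}, with n_i = chi_i + (1 - v_i) - 1/2. *)

Lemma Hiso_of_bijection {e : nat} {VT1 VT2 : lmodType algC}
    {act1 : 'M[algC]_e -> VT1 -> VT1} {act2 : 'M[algC]_e -> VT2 -> VT2}
    {A : VT1 -> Prop} {B : VT2 -> Prop} {phi : VT1 -> VT2} {psi : VT2 -> VT1} :
  cancel phi psi -> cancel psi phi -> linear phi ->
  (forall X x, phi (act1 X x) = act2 X (phi x)) ->
  (forall x, B (phi x) <-> A x) ->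
  Hiso act1 act2 A B.
Proof.
move=> phiK psiK phi_lin phi_act BA; exists phi; split=> //.
- by move=> x /BA.
- by move=> y By; exists (psi y); rewrite ?psiK // -BA psiK.
- by move=> x y _ _ /(can_inj phiK).
- by move=> c x y _ _; rewrite phi_lin.
Qed.

Lemma big_option {V : nmodType} {T : finType} (F : option T -> V) :
  \sum_(u : option T) F u = F None + \sum_(x : T) F (Some x).
Proof.
rewrite (bigD1 None) //=; congr (_ + _).
rewrite (reindex_omap Some id) /=; last by case.
by apply: eq_bigl => x; rewrite eqxx.
Qed.

Definition mnm_comp {n n' : nat} (g : 'I_n' -> 'I_n) (m : 'X_{1..n}) : 'X_{1..n'} :=
  [multinom m (g i) | i < n'].

Lemma mnm_compK {n n' : nat} {g : 'I_n' -> 'I_n} {h : 'I_n -> 'I_n'} :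
  cancel h g -> cancel (mnm_comp g) (mnm_comp h).
Proof. by move=> hK m; apply/mnmP => i; rewrite !mnmE hK. Qed.

Definition mrename {R : comNzRingType} {n1 n2 : nat} (s : 'I_n1 -> 'I_n2)
  (p : {mpoly R[n1]}) : {mpoly R[n2]} :=
  p \mPo [tuple 'X_(s i) | i < n1].

HB.instance Definition _ (R : comNzRingType) (n1 n2 : nat) (s : 'I_n1 -> 'I_n2) :=
  GRing.LRMorphism.copy (@mrename R n1 n2 s) (comp_mpoly [tuple 'X_(s i) | i < n1]).

Section MpolyRename.
Context {R : comNzRingType} {n1 n2 : nat}.
Context {s : 'I_n1 -> 'I_n2} {s' : 'I_n2 -> 'I_n1}.
Hypotheses (sK : cancel s s') (s'K : cancel s' s).
Implicit Types (p : {mpoly R[n1]}).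

Lemma mrenameX m : mrename s ('X_[m] : {mpoly R[n1]}) = 'X_[mnm_comp s' m].
Proof.
rewrite [LHS]comp_mpolyX mpolyXE_id (reindex s) /=; last by exists s' => i _.
by apply: eq_big => // i _; rewrite tnth_mktuple mnmE sK.
Qed.

Lemma mcoeff_mrename p m : (mrename s p)@_m = p@_(mnm_comp s m).
Proof.
rewrite [in LHS](mpolyE p) [in RHS](mpolyE p) [mrename _ _]linear_sum !raddf_sum /=.
apply: eq_bigr => m' _; rewrite linearZ /= mrenameX !mcoeffZ !mcoeffX.
by congr (_ * _%:R); rewrite -(can_eq (mnm_compK sK)) mnm_compK.
Qed.

Lemma msupp_mrename p m : (m \in msupp (mrename s p)) = (mnm_comp s m \in msupp p).
Proof. by rewrite !mcoeff_msupp mcoeff_mrename. Qed.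

Lemma mrename_mderiv j p : mrename s (mderiv j p) = mderiv (s j) (mrename s p).
Proof.
have compD m : mnm_comp s (m + U_(s j)) = (mnm_comp s m + U_(j))%MM.
  by apply/mnmP => i; rewrite !(mnmE, mnmDE) (inj_eq (can_inj sK)).
apply/mpolyP => m.
by rewrite mcoeff_mderiv !mcoeff_mrename mcoeff_mderiv compD mnmE.
Qed.

Lemma mrename_Xderiv i j p :
  mrename s ('X_i * mderiv j p) = 'X_(s i) * mderiv (s j) (mrename s p).
Proof.
rewrite rmorphM /= mrename_mderiv; congr (_ * _).
by rewrite [LHS]comp_mpolyXU -tnth_nth tnth_mktuple.
Qed.

End MpolyRename.

Lemma mrenameK {R : comNzRingType} {n1 n2 : nat}
    {s : 'I_n1 -> 'I_n2} {s' : 'I_n2 -> 'I_n1} :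
  cancel s s' -> cancel s' s -> cancel (@mrename R _ _ s) (mrename s').
Proof.
move=> sK s'K p; apply/mpolyP => m.
by rewrite (mcoeff_mrename s'K sK) (mcoeff_mrename sK s'K) mnm_compK.
Qed.

Lemma mcoeff_Xderiv_diag {R : comNzRingType} {n : nat} (j : 'I_n)
    (p : {mpoly R[n]}) (m : 'X_{1..n}) :
  ('X_j * mderiv j p)@_m = (m j)%:R * p@_m.
Proof.
have XderivX m' : ('X_j : {mpoly R[n]}) * mderiv j 'X_[m'] = (m' j)%:R *: 'X_[m'].
  rewrite mderivX -scalerAr -mpolyXD.
  have [->|m'j_gt0] := eqVneq (m' j) 0%N; first by rewrite !scale0r.
  congr (_ *: 'X_[_]); apply/mnmP => i; rewrite mnmDE mnmBE mnm1E.
  case: eqVneq => [<-|_] /=; last by rewrite add0n subn0.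
  by rewrite add1n subn1 prednK // lt0n.
rewrite [in LHS](mpolyE p) [in RHS](mpolyE p) linear_sum mulr_sumr !raddf_sum /=.
rewrite mulr_sumr; apply: eq_bigr => m' _.
rewrite linearZ -scalerAr XderivX scalerA !mcoeffZ mcoeffX.
by case: eqVneq => [->|_]; rewrite ?mulr1 ?mulr0 // mulrC.
Qed.

Lemma mcoeff_euler {T : finType} {e : nat} (u : T) (p : SymEW T e) m :
  (\sum_(a < e) xvar u a * mderiv (vidx u a) p)@_m = (degIn u m)%:R * p@_m.
Proof.
rewrite raddf_sum /= /degIn natr_sum mulr_suml.
by apply: eq_bigr => a _; rewrite mcoeff_Xderiv_diag.
Qed.

Definition mweight {k e : nat} (v : Ik k) (m : 'X_{1..nvars (Ubasis k) e})
    (i : 'I_k) : algC :=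
  (degIn (Some (i, false)) m)%:R - (degIn (Some (i, true)) m)%:R
  + ((v i)%:R - 2^-1).

Lemma sum_cartanU {k : nat} (t : 'I_k -> algC) (d : Ubasis k -> algC) :
  \sum_u cartanU t u * d u =
  \sum_i t i * (d (Some (i, false)) - d (Some (i, true))).
Proof.
rewrite big_option /= mul0r add0r.
rewrite (eq_bigr (fun x => cartanU t (Some (x.1, x.2)) * d (Some (x.1, x.2))));
  last by case.
rewrite -(pair_bigA _ (fun i b => cartanU t (Some (i, b)) * d (Some (i, b)))) /=.
by apply: eq_bigr => i _; rewrite big_bool /= mulrBr mulNr addrC.
Qed.

Lemma mcoeff_cartanAct {k e : nat} (t : 'I_k -> algC) (f : Vspace k e) v m :
  (cartanAct t f v)@_m = (\sum_i t i * mweight v m i) * (f v)@_m.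
Proof.
rewrite ffunE mcoeffD mcoeffZ raddf_sum /=.
under eq_bigr => u _ do rewrite -scaler_sumr mcoeffZ mcoeff_euler mulrA.
rewrite -mulr_suml -mulrDl (sum_cartanU t (fun u => (degIn u m)%:R)) -big_split /=.
congr (_ * _); apply: eq_bigr => i _.
by rewrite /mweight [RHS]mulrDr (mulrC _ (t i)).
Qed.

Lemma VweightP {k e : nat} (chi : 'I_k -> algC) (f : Vspace k e) :
  Vweight chi f <->
  (forall v m, m \in msupp (f v) -> forall i, mweight v m i = chi i).
Proof.
have pick (G : 'I_k -> algC) i : \sum_j (j == i)%:R * G j = G i.
  under eq_bigr => j _ do rewrite mulr_natl mulrb.
  by rewrite -big_mkcond big_pred1_eq.
split=> [W v m | W t].
  rewrite mcoeff_msupp => fvm_neq0 i.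
  have /(congr1 (fun g : Vspace k e => (g v)@_m)) := W (fun j => (j == i)%:R).
  rewrite mcoeff_cartanAct ffunE mcoeffZ pick.
  under [X in _ = X * _]eq_bigr => j _ do rewrite mulrC.
  by rewrite pick => /(mulIf fvm_neq0).
apply/ffunP => v; apply/mpolyP => m; rewrite mcoeff_cartanAct ffunE mcoeffZ.
have [fvm_eq0|fvm_neq0] := eqVneq (f v)@_m 0; first by rewrite fvm_eq0 !mulr0.
congr (_ * _); apply: eq_bigr => i _.
by rewrite W 1?mulrC // mcoeff_msupp.
Qed.

Definition vrelabel {T1 T2 : finType} {e : nat} (tau : T1 -> T2)
    (j : 'I_(nvars T1 e)) : 'I_(nvars T2 e) :=
  vidx (tau (enum_val j).1) (enum_val j).2.

Lemma vrelabel_vidx {T1 T2 : finType} {e : nat} (tau : T1 -> T2) t (a : 'I_e) :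
  vrelabel tau (vidx t a) = vidx (tau t) a.
Proof. by rewrite /vrelabel /vidx enum_rankK. Qed.

Lemma vrelabelK {T1 T2 : finType} {e : nat} {tau : T1 -> T2} {tau' : T2 -> T1} :
  cancel tau tau' -> cancel (@vrelabel _ _ e tau) (vrelabel tau').
Proof.
move=> tauK j; rewrite -[j]enum_valK; case: (enum_val j) => t a.
by rewrite -/(vidx t a) !vrelabel_vidx tauK.
Qed.

Section Relabel.
Context {T1 T2 : finType} {e : nat} {tau : T1 -> T2} {tau' : T2 -> T1}.
Hypotheses (tauK : cancel tau tau') (tau'K : cancel tau' tau).

Lemma mrename_symAct X (p : SymEW T1 e) :
  mrename (vrelabel tau) (symAct X p) = symAct X (mrename (vrelabel tau) p).
Proof.
rewrite /symAct [mrename _ _]linear_sum (reindex tau) /=; last by exists tau' => t _.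
apply: eq_bigr => t _; rewrite linear_sum; apply: eq_bigr => a _.
rewrite linear_sum; apply: eq_bigr => b _.
by rewrite linearZ /= (mrename_Xderiv (vrelabelK tauK) (vrelabelK tau'K)) !vrelabel_vidx.
Qed.

Lemma degIn_relabel u (m : 'X_{1..nvars T2 e}) :
  degIn u (mnm_comp (vrelabel tau) m) = degIn (tau u) m.
Proof. by apply: eq_bigr => a _; rewrite mnmE vrelabel_vidx. Qed.

End Relabel.

Definition UtoR {k : nat} (u : Ubasis k) : Rbasis k :=
  if u is Some (i, b) then Some (i, if b then 0 else 1) else None.

Definition RtoU {k : nat} (r : Rbasis k) : Ubasis k :=
  if r is Some (i, j) then Some (i, j == 0) else None.

Lemma UtoRK {k : nat} : cancel (@UtoR k) RtoU.
Proof. by case=> [[i []]|]. Qed.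

Lemma RtoUK {k : nat} : cancel (@RtoU k) UtoR.
Proof.
case=> [[i j]|] //=; congr (Some (i, _)).
by case: j => [[|[|j]] lt_j2] //=; apply: val_inj.
Qed.

Definition vcompl {k : nat} (v : Ik k) : Ik k := [ffun i => ~~ v i].

Lemma vcomplK {k : nat} : involutive (@vcompl k).
Proof. by move=> v; apply/ffunP => i; rewrite !ffunE negbK. Qed.

Definition VtoR {k e : nat} (f : Vspace k e) : Rspace k e :=
  [ffun v => mrename (vrelabel UtoR) (f (vcompl v))].

Definition RtoV {k e : nat} (g : Rspace k e) : Vspace k e :=
  [ffun v => mrename (vrelabel RtoU) (g (vcompl v))].

Lemma VtoRK {k e : nat} : cancel (@VtoR k e) RtoV.
Proof.
move=> f; apply/ffunP => v.
by rewrite !ffunE vcomplK (mrenameK (vrelabelK UtoRK) (vrelabelK RtoUK)).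
Qed.

Lemma RtoVK {k e : nat} : cancel (@RtoV k e) VtoR.
Proof.
move=> g; apply/ffunP => v.
by rewrite !ffunE vcomplK (mrenameK (vrelabelK RtoUK) (vrelabelK UtoRK)).
Qed.

Lemma VtoR_is_linear {k e : nat} : linear (@VtoR k e).
Proof. by move=> c f g; apply/ffunP => v; rewrite !ffunE linearP. Qed.

Lemma VtoR_Vact {k e : nat} X (f : Vspace k e) : VtoR (Vact X f) = Ract X (VtoR f).
Proof.
apply/ffunP => v.
by rewrite !ffunE (mrename_symAct UtoRK RtoUK).
Qed.

Lemma mweight_vcompl {k e : nat} (chi : 'I_k -> algC) v
    (m : 'X_{1..nvars (Rbasis k) e}) i :
  mweight (vcompl v) (mnm_comp (vrelabel UtoR) m) i = chi i <->
  (degIn (Some (i, 1)) m)%:R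
    = (degIn (Some (i, 0)) m)%:R + (chi i + (v i)%:R - 2^-1) :> algC.
Proof.
rewrite /mweight !degIn_relabel /= ffunE.
have two_neq0 : (2 : algC) != 0 by rewrite pnatr_eq0.
by split=> [<-|->]; case: (v i) => /=; field.
Qed.

Lemma RHSsub_VtoR {k e : nat} (chi : 'I_k -> algC) (f : Vspace k e) :
  RHSsub chi (VtoR f) <-> Vweight chi f.
Proof.
have sK := vrelabelK (e := e) (@UtoRK k).
have s'K := vrelabelK (e := e) (@RtoUK k).
rewrite VweightP; split=> [R_f v m fvm i | W v m].
  have := R_f (vcompl v) (mnm_comp (vrelabel RtoU) m).
  rewrite ffunE vcomplK (msupp_mrename sK s'K) mnm_compK // => /(_ fvm i).
  by rewrite -(mweight_vcompl chi) vcomplK mnm_compK.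
by rewrite ffunE (msupp_mrename sK s'K) => /W Wm i; apply/mweight_vcompl/Wm.
Qed.

Theorem mainTheorem11 (e k : nat) (hk : (1 <= k)%N) (chi : 'I_k -> algC)
  (hchi : forall i, chi i - 2^-1 \is a Num.int) :
  @Hiso e (Vspace k e) (Rspace k e) (@Vact k e) (@Ract k e)
    (@Vweight k e chi) (@RHSsub k e chi).
Proof.
(* The isomorphism is a renaming of variables. *)
apply: (Hiso_of_bijection VtoRK RtoVK VtoR_is_linear VtoR_Vact).
exact: RHSsub_VtoR.
Qed.
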